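(* Let $G$ be a finite graph with $n$ vertices, let $0<\epsilon<1$, and let $d$ be an integer such that for every vertex $v$ of $G$, at least $(1-\epsilon)n$ vertices of $G$ are at distance exactly $d$ from $v$. Suppose that for some integer $r\ge 0$ with $2r+1\le d$ and some $N>0$ we have $|N_r(v)|\ge N$ for every vertex $v$ of $G$. Then $|N_{3r+1}(v)| \ge N\epsilon^{-1}$ for every vertex $v$ of $G$.
   Context: For a vertex $v$ and integer $s\ge0$, $N_s(v)$ denotes the set of vertices at graph distance at most $s$ from $v$. The paper calls such a $G$ $\epsilon$-distance-uniform with critical distance $d$. *)

From HB Require Import structures.
From mathcomp Require Import all_boot all_order all_algebra.
Set Implicit Arguments. Unset Strict Implicit. Unset Printing Implicit Defensive.

Definition simple_graph (T : finType) (e : rel T) : Prop :=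
  irreflexive e /\ symmetric e.

(* ball e s v = N_s(v): vertices at graph distance at most s from v. *)
Fixpoint ball (T : finType) (e : rel T) (s : nat) (v : T) : {set T} :=
  match s with
  | 0 => [set v]
  | s'.+1 => ball e s' v :|: [set w | [exists u in ball e s' v, e u w]]
  end.

Definition sphere (T : finType) (e : rel T) (d : nat) (v : T) : {set T} :=
  match d with
  | 0 => [set v]
  | d'.+1 => ball e d v :\: ball e d' v
  end.

(* Take a maximal 2r-separated set W of vertices in N_{2r+1}(v) containing v;
   by maximality the 2r-balls around W cover N_{2r+1}(v). Any vertex x lies
   outside the d-sphere of some w in W: either w = v, or x is at distance d
   from v and the point at distance 2r+1 from v on a geodesic to x is within
   2r of some w, so x is within d-1 of w. As each d-sphere misses at most
   eps n vertices, W has at least 1/eps elements. The r-balls around W are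
   pairwise disjoint and lie in N_{3r+1}(v), each of size at least N. *)
From HB Require Import structures.
From mathcomp Require Import all_boot all_order all_algebra.
From mathcomp Require Import zify lra.
Import Order.TTheory GRing.Theory Num.Theory.
Set Implicit Arguments. Unset Strict Implicit.

Section CardBigcup.
Variables (I T : finType).
Implicit Types (W : {set I}) (F : I -> {set T}).

Lemma leq_card_bigcup W F : (#|\bigcup_(i in W) F i| <= \sum_(i in W) #|F i|)%N.
Proof.
elim/big_rec2: _ => [|i n U _ leUn]; first by rewrite cards0.
by rewrite (leq_trans (leq_card_setU _ _)) ?leq_add2l.
Qed.

Lemma card_bigcup_disjoint W F :
    {in W &, forall i j, i != j -> [disjoint F i & F j]} ->
  #|\bigcup_(i in W) F i| = (\sum_(i in W) #|F i|)%N.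
Proof.
move=> disjF; pose G i := if i \in W then F i else set0.
have disjG i j : i != j -> [disjoint G i & G j].
  rewrite /G; case: ifP => Wi; case: ifP => Wj neq_ij;
    by rewrite ?disjF // -setI_eq0 ?setI0 ?set0I.
have -> : \bigcup_(i in W) F i = \bigcup_i G i.
  by rewrite big_mkcond.
rewrite -sum1_card (partition_disjoint_bigcup _ _ disjG) [RHS]big_mkcond /=.
by apply: eq_bigr => i _; rewrite sum1_card /G; case: ifP; rewrite ?cards0.
Qed.

End CardBigcup.

Section Balls.
Variables (T : finType) (e : rel T).
Implicit Types (v w x y z : T) (W : {set T}).

Lemma in_ball0 v x : (x \in ball e 0 v) = (x == v).
Proof. by rewrite /= in_set1. Qed.

Lemma in_ballS s v x :
  (x \in ball e s.+1 v) = (x \in ball e s v) || [exists u in ball e s v, e u x].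
Proof. by rewrite /= in_setU in_set. Qed.

Lemma sub_ball s t v : (s <= t)%N -> ball e s v \subset ball e t v.
Proof.
move=> /subnK <-; elim: (t - s)%N => [|k IH] //=.
by apply: subset_trans IH (subsetUl _ _).
Qed.

Lemma ball_center s v : v \in ball e s v.
Proof. by apply: subsetP (sub_ball v (leq0n s)) _ _; rewrite in_ball0. Qed.

Lemma ball_add a b x y z :
  y \in ball e a x -> z \in ball e b y -> z \in ball e (a + b) x.
Proof.
move=> ya; elim: b z => [|b IH] z; first by rewrite in_ball0 addn0 => /eqP ->.
rewrite addnS !in_ballS => /orP[/IH -> // | /existsP[u /andP[ub euz]]].
by apply/orP; right; apply/existsP; exists u; rewrite IH.
Qed.

Lemma ball_split a b x v :
  x \in ball e (a + b) v -> exists2 y, y \in ball e a v & x \in ball e b y.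
Proof.
elim: b x => [|b IH] x; first by rewrite addn0 => xa; exists x; rewrite ?in_ball0.
rewrite addnS in_ballS => /orP[/IH[y ya xb] | /existsP[u /andP[uab eux]]].
  by exists y => //; rewrite in_ballS xb.
have [y ya ub] := IH _ uab; exists y => //.
by rewrite in_ballS; apply/orP; right; apply/existsP; exists u; rewrite ub.
Qed.

Lemma notin_sphere k w x : x \in ball e k w -> x \notin sphere e k.+1 w.
Proof. by rewrite /sphere in_setD => ->. Qed.

Definition separated s W :=
  [forall w1 in W, forall w2 in W, (w1 != w2) ==> (w2 \notin ball e s w1)].

Lemma separatedP s W :
  reflect {in W &, forall w1 w2, w1 != w2 -> w2 \notin ball e s w1}
          (separated s W).
Proof.
apply: (iffP forall_inP) => [sepW w1 w2 W1 W2 | sepW w1 W1].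
  by move: (sepW w1 W1) => /forall_inP/(_ w2 W2)/implyP.
by apply/forall_inP => w2 W2; apply/implyP; apply: sepW.
Qed.

Lemma cover_by_sphere_complements s d v W :
    (s < d)%N -> v \in W ->
    (forall y, y \in ball e s.+1 v -> exists2 w, w \in W & y \in ball e s w) ->
  [set: T] \subset \bigcup_(w in W) ~: sphere e d w.
Proof.
move=> lt_sd vW netW; apply/subsetP => x _; apply/bigcupP.
have [xSv | xSv] := boolP (x \in sphere e d v); last by exists v; rewrite ?inE.
case: d lt_sd xSv => [|k] //; rewrite ltnS => le_sk /setDP[xk _].
have /ball_split[y /netW[w wW yw] xy] : x \in ball e (s.+1 + (k - s)) v.
  by rewrite addSn subnKC.
exists w; rewrite // inE notin_sphere // -(subnKC le_sk).
exact: ball_add yw xy.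
Qed.

Hypothesis e_sym : symmetric e.

Lemma ball_sym a x y : y \in ball e a x -> x \in ball e a y.
Proof.
elim: a y => [|a IH] y; first by rewrite !in_ball0 eq_sym.
rewrite in_ballS => /orP[/IH xa | /existsP[u /andP[ua euy]]].
  by rewrite in_ballS xa.
have uy : u \in ball e 1 y.
  by rewrite in_ballS; apply/orP; right; apply/existsP; exists y;
    rewrite in_ball0 eqxx e_sym.
by rewrite -add1n; apply: ball_add uy (IH _ ua).
Qed.

Lemma exists_separated_net s (A : {set T}) v : v \in A ->
  exists W, [/\ v \in W, W \subset A, separated s W &
    forall y, y \in A -> exists2 w, w \in W & y \in ball e s w].
Proof.
move=> vA; pose P W := [&& v \in W, W \subset A & separated s W].
have P1 : P [set v].
  rewrite /P set11 sub1set vA; apply/separatedP => w1 w2.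
  by rewrite !in_set1 => /eqP-> /eqP->; rewrite eqxx.
have [W /maxsetP[/and3P[vW WA sepW] maxW] _] := maxset_exists P1.
exists W; split=> // y yA; apply/exists_inP; apply: contraT => farW.
have yW : y \notin W.
  by apply: contra farW => yW; apply/exists_inP; exists y; rewrite ?ball_center.
suff /(maxW _)/(_ (subsetUr _ _)) Wy : P (y |: W) by rewrite -Wy setU11 in yW.
rewrite /P in_setU1 vW orbT subUset sub1set yA WA /=.
have far w : w \in W -> y \notin ball e s w.
  by move=> wW; apply: contra farW => yw; apply/exists_inP; exists w.
apply/separatedP => w1 w2; rewrite !in_setU1.
case/predU1P=> [-> | W1]; case/predU1P=> [-> | W2]; rewrite ?eqxx // => neq12.
- by apply: contra (far _ W2); apply: ball_sym.
- exact: far.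
- exact: (separatedP _ _ sepW).
Qed.

Lemma ball_packing r s v W : separated (2 * r) W -> W \subset ball e s v ->
  (\sum_(w in W) #|ball e r w| <= #|ball e (s + r) v|)%N.
Proof.
move=> /separatedP sepW /subsetP Wball; rewrite -card_bigcup_disjoint.
  apply/subset_leq_card/bigcupsP => w wW; apply/subsetP => x.
  exact: ball_add (Wball w wW).
move=> w1 w2 W1 W2 neq12; apply/pred0P => x /=; apply/negbTE/andP => -[x1 x2].
have := ball_add x1 (ball_sym x2); rewrite addnn -mul2n.
exact/negP/sepW.
Qed.

End Balls.

Local Open Scope ring_scope.

Lemma card_cover_by_small_sets (R : realFieldType) (I T : finType)
    (W : {set I}) (B : I -> {set T}) (eps : R) :
  (0 < #|T|)%N -> (forall i, #|B i|%:R <= eps * #|T|%:R) ->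
  [set: T] \subset \bigcup_(i in W) B i -> 1 <= eps * #|W|%:R.
Proof.
move=> T_gt0 smallB /subset_leq_card coverB.
have : #|T|%:R <= \sum_(i in W) eps * #|T|%:R :> R.
  apply: le_trans (_ : (\sum_(i in W) #|B i|)%:R <= _).
    by rewrite ler_nat -cardsT (leq_trans coverB) ?leq_card_bigcup.
  by rewrite natr_sum ler_sum.
rewrite sumr_const -[X in _ <= X]mulr_natr.
have : 0 < #|T|%:R :> R by rewrite ltr0n.
nra.
Qed.

Theorem lemma4 (R : realFieldType) (T : finType) (e : rel T) (eps N : R)
    (d r : nat) :
  simple_graph e ->
  0 < eps -> eps < 1 ->
  (forall v : T, (1 - eps) * #|T|%:R <= #|sphere e d v|%:R) ->
  (2 * r + 1 <= d)%N ->
  0 < N ->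
  (forall v : T, N <= #|ball e r v|%:R) ->
  forall v : T, N / eps <= #|ball e (3 * r + 1) v|%:R.
Proof.
move=> [_ e_sym] eps_gt0 _ large_sphere le_rd N_gt0 large_ball v.
have [W [vW Wball sepW netW]] :=
  exists_separated_net e_sym (2 * r) (ball_center e (2 * r).+1 v).
have small_compl w : #|~: sphere e d w|%:R <= eps * #|T|%:R :> R.
  by have := large_sphere w; rewrite -(cardsC (sphere e d w)) natrD; lra.
have eps_W : 1 <= eps * #|W|%:R.
  apply: card_cover_by_small_sets small_compl _; first by apply/card_gt0P; exists v.
  by apply: cover_by_sphere_complements netW; rewrite // addn1 in le_rd.
have packW : N * #|W|%:R <= #|ball e (3 * r + 1) v|%:R.
  rewrite mulr_natr -sumr_const.
  apply: le_trans (ler_sum _ (fun w _ => large_ball w)) _.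
  rewrite -natr_sum ler_nat (_ : 3 * r + 1 = (2 * r).+1 + r)%N; last by lia.
  exact: ball_packing.
apply: le_trans packW; rewrite ler_pdivrMr //; nra.
Qed.
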